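(* Let $\mathcal R$ be a nonzero commutative ring. Then $\mathcal R[[Y]]^{W^v}=\mathcal R[Y]^{W^v}$ (i.e. every $W^v$-invariant element of the Looijenga algebra has finite support) if and only if $W^v$ is finite.
   Context: $I$ finite, $A$ a generalized Cartan matrix; $X,Y$ dual free $\mathbb Z$-modules of finite rank with free families $(\alpha_i)\subset X$, $(\alpha_i^\vee)\subset Y$, $\alpha_j(\alpha_i^\vee)=a_{i,j}$; $\mathbb A=Y\otimes\mathbb R$; $r_i(v)=v-\alpha_i(v)\alpha_i^\vee$; $W^v=\langle r_i\rangle$; $Q^\vee_+=\bigoplus\mathbb N\alpha_i^\vee$, $x\le_{Q^\vee}y$ iff $y-x\in Q^\vee_+$. A set $E\subset Y$ is almost finite if there is a finite $J\subset Y$ with every element of $E$ $\le_{Q^\vee}$ some element of $J$. $\mathcal R[[Y]]$ is the set of formal series $\sum_{\lambda\in Y}a_\lambda e^\lambda$ with almost finite support ($e^\lambda e^\mu=e^{\lambda+\mu}$), $\mathcal R[Y]$ its subalgebra of finitely supported elements, and the superscript $W^v$ denotes elements with $a_{w(\lambda)}=a_\lambda$ for all $w\in W^v$. *)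

From HB Require Import structures.
From mathcomp Require Import all_boot all_order all_algebra.
Set Implicit Arguments. Unset Strict Implicit. Unset Printing Implicit Defensive.
Import Order.TTheory GRing.Theory Num.Theory.
Local Open Scope ring_scope.

(* Y = Z^m (row vectors), X = its dual, identified with Z^m via the pairing. *)
Definition pair (m : nat) (x y : 'rV[int]_m) : int := \sum_(k < m) x 0 k * y 0 k.

Definition free_family (n m : nat) (v : 'I_n -> 'rV[int]_m) : Prop :=
  forall c : 'I_n -> int, \sum_(i < n) c i *: v i = 0 -> forall i, c i = 0.

Definition is_GCM (n : nat) (A : 'M[int]_n) : Prop :=
  [/\ forall i, A i i = 2,
      forall i j, i != j -> A i j <= 0 &
      forall i j, A i j = 0 <-> A j i = 0].

Definition refl (n m : nat) (alpha alphav : 'I_n -> 'rV[int]_m) (i : 'I_n)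
  (v : 'rV[int]_m) : 'rV[int]_m := v - pair (alpha i) v *: alphav i.

Definition wact (n m : nat) (alpha alphav : 'I_n -> 'rV[int]_m) (s : seq 'I_n)
  (v : 'rV[int]_m) : 'rV[int]_m := foldr (refl alpha alphav) v s.

(* W^v = <r_i> is finite (as a group of automorphisms of Y): finitely many
   distinct maps are realized by words in the generators (the r_i are
   involutions, so words in the generators exhaust the generated group). *)
Definition Wv_finite (n m : nat) (alpha alphav : 'I_n -> 'rV[int]_m) : Prop :=
  exists L : seq (seq 'I_n), forall s : seq 'I_n,
    exists2 t, t \in L & forall v, wact alpha alphav s v = wact alpha alphav t v.

Definition leQ (n m : nat) (alphav : 'I_n -> 'rV[int]_m) (x y : 'rV[int]_m) : Prop :=
  exists c : 'I_n -> nat, y - x = \sum_(i < n) (c i)%:Z *: alphav i.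

(* support of a formal series a = sum a_lambda e^lambda is almost finite *)
Definition almost_finite_supp (R : nzRingType) (n m : nat)
  (alphav : 'I_n -> 'rV[int]_m) (a : 'rV[int]_m -> R) : Prop :=
  exists J : seq 'rV[int]_m, forall lam, a lam != 0 ->
    exists2 mu, mu \in J & leQ alphav lam mu.

Definition finite_supp (R : nzRingType) (m : nat) (a : 'rV[int]_m -> R) : Prop :=
  exists S : seq 'rV[int]_m, forall lam, a lam != 0 -> lam \in S.

Definition Wv_invariant (R : nzRingType) (n m : nat)
  (alpha alphav : 'I_n -> 'rV[int]_m) (a : 'rV[int]_m -> R) : Prop :=
  forall (s : seq 'I_n) lam, a (wact alpha alphav s lam) = a lam.

(* If W^v is finite it has a longest element w0, and by the
   classical criterion "l(w r_i) >= l(w) implies w(alphav_i) in Q^vee_+"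
   (proved by reduction to rank two) w0 maps Q^vee_+ into -Q^vee_+.  So if
   lam lies below mu in J, then w0 lam lies below mu' in J and above
   w0 mu, which confines the support of an invariant almost finite series to
   finitely many translates.  Conversely, the indicator of the orbit of a
   dominant lam is invariant with support below lam, so dominant orbits are
   finite; Y is spanned by finitely many dominant vectors, hence W^v has only
   finitely many actions on Y. *)

From HB Require Import structures.
From mathcomp Require Import all_boot all_order all_algebra.
From mathcomp Require Import zify ring.
From mathcomp Require Import boolp.
Set Implicit Arguments. Unset Strict Implicit. Unset Printing Implicit Defensive.
Import Order.TTheory GRing.Theory Num.Theory.
Local Open Scope ring_scope.

Section Pairing.
Variable m : nat.
Implicit Types x y z : 'rV[int]_m.

Lemma pairC x y : pair x y = pair y x.
Proof. by apply: eq_bigr => k _; rewrite mulrC. Qed.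

Lemma pairD x y z : pair x (y + z) = pair x y + pair x z.
Proof. by rewrite /pair -big_split; apply: eq_bigr => k _; rewrite mxE mulrDr. Qed.

Lemma pairZ x c y : pair x (c *: y) = c * pair x y.
Proof. by rewrite /pair mulr_sumr; apply: eq_bigr => k _; rewrite mxE mulrCA. Qed.

Lemma pairN x y : pair x (- y) = - pair x y.
Proof. by rewrite -scaleN1r pairZ mulN1r. Qed.

Lemma pairB x y z : pair x (y - z) = pair x y - pair x z.
Proof. by rewrite pairD pairN. Qed.

Lemma pair0 x : pair x 0 = 0.
Proof. by rewrite -(scale0r (0 : 'rV[int]_m)) pairZ mul0r. Qed.

Lemma pair_sum x I (r : seq I) (P : pred I) (F : I -> 'rV[int]_m) :
  pair x (\sum_(i <- r | P i) F i) = \sum_(i <- r | P i) pair x (F i).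
Proof. by elim/big_rec2: _ => [|i y1 y2 _ <-]; rewrite ?pair0 ?pairD. Qed.

Lemma pair_delta x k : pair x (delta_mx 0 k) = x 0 k.
Proof.
rewrite /pair (bigD1 k) //= mxE !eqxx mulr1 big1 ?addr0 // => j /negbTE nj.
by rewrite mxE nj andbF mulr0.
Qed.

End Pairing.

Section Reflections.
Variables (n m : nat) (alpha alphav : 'I_n -> 'rV[int]_m).
Local Notation r := (refl alpha alphav).
Local Notation act := (wact alpha alphav).

Lemma act_cat s t v : act (s ++ t) v = act s (act t v).
Proof. by rewrite /wact foldr_cat. Qed.

Lemma act_rcons s i v : act (rcons s i) v = act s (r i v).
Proof. by rewrite -cats1 act_cat. Qed.

Lemma reflD i x y : r i (x + y) = r i x + r i y.
Proof. by rewrite /refl pairD scalerDl opprD addrACA. Qed.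

Lemma reflZ i c x : r i (c *: x) = c *: r i x.
Proof. by rewrite /refl pairZ scalerBr scalerA. Qed.

Lemma actD s x y : act s (x + y) = act s x + act s y.
Proof. by elim: s => //= i s IH; rewrite IH reflD. Qed.

Lemma actZ s c x : act s (c *: x) = c *: act s x.
Proof. by elim: s => //= i s IH; rewrite IH reflZ. Qed.

Lemma actN s x : act s (- x) = - act s x.
Proof. by rewrite -!scaleN1r actZ. Qed.

Lemma actB s x y : act s (x - y) = act s x - act s y.
Proof. by rewrite actD actN. Qed.

Lemma act0 s : act s 0 = 0.
Proof. by elim: s => //= i s ->; rewrite /refl pair0 scale0r subr0. Qed.

Lemma act_sum s I (rs : seq I) (P : pred I) (F : I -> 'rV[int]_m) :
  act s (\sum_(i <- rs | P i) F i) = \sum_(i <- rs | P i) act s (F i).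
Proof. by elim/big_rec2: _ => [|i y1 y2 _ <-]; rewrite ?act0 ?actD. Qed.

(* [leQ alphav x y] is convertible to [Qplus (y - x)]. *)
Definition Qplus (v : 'rV[int]_m) :=
  exists c : 'I_n -> nat, v = \sum_i (c i)%:Z *: alphav i.

Lemma Qplus0 : Qplus 0.
Proof. by exists (fun _ => 0%N); rewrite big1 // => i _; rewrite scale0r. Qed.

Lemma QplusD x y : Qplus x -> Qplus y -> Qplus (x + y).
Proof.
move=> [c ->] [d ->]; exists (fun i => c i + d i)%N.
by rewrite -big_split; apply: eq_bigr => i _; rewrite PoszD scalerDl.
Qed.

Lemma QplusZ (k : nat) x : Qplus x -> Qplus (k%:Z *: x).
Proof.
move=> [c ->]; exists (fun i => k * c i)%N.
by rewrite scaler_sumr; apply: eq_bigr => i _; rewrite scalerA PoszM.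
Qed.

Lemma Qplus_sum (c : 'I_n -> nat) (F : 'I_n -> 'rV[int]_m) :
  (forall i, Qplus (F i)) -> Qplus (\sum_i (c i)%:Z *: F i).
Proof. by move=> hF; elim/big_rec: _ => [|i x _ hx]; [apply: Qplus0 | apply/QplusD/hx/QplusZ]. Qed.

Lemma Qplus_alphav i : Qplus (alphav i).
Proof.
exists (fun j => if j == i then 1%N else 0%N).
rewrite (bigD1 i) //= eqxx scale1r big1 ?addr0 // => j /negbTE ->.
by rewrite scale0r.
Qed.

Lemma Qplus_pair_ge0 phi x : (forall i, 0 <= pair phi (alphav i)) ->
  Qplus x -> 0 <= pair phi x.
Proof.
move=> hphi [c ->]; rewrite pair_sum sumr_ge0 // => i _.
by rewrite pairZ mulr_ge0.
Qed.

Lemma Qplus_coef_le_pair phi (c : 'I_n -> nat) i : (forall j, 1 <= pair phi (alphav j)) ->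
  (c i)%:Z <= pair phi (\sum_j (c j)%:Z *: alphav j).
Proof.
move=> hphi; rewrite pair_sum (bigD1 i) //= pairZ -[leLHS]addr0 lerD //.
  by rewrite ler_peMr.
by rewrite sumr_ge0 // => j _; rewrite pairZ mulr_ge0 // (le_trans _ (hphi j)).
Qed.

Hypothesis pair_alpha_alphav : forall i, pair (alpha i) (alphav i) = 2.

Lemma pair_refl i v : pair (alpha i) (r i v) = - pair (alpha i) v.
Proof. by rewrite /refl pairB pairZ pair_alpha_alphav; ring. Qed.

Lemma reflK i : involutive (r i).
Proof. by move=> v; rewrite {1}/refl pair_refl scaleNr opprK subrK. Qed.

Lemma refl_alphav i : r i (alphav i) = - alphav i.
Proof. by rewrite /refl pair_alpha_alphav; apply/rowP => k; rewrite !mxE; ring. Qed.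

Lemma act_revK s : cancel (act s) (act (rev s)).
Proof. by elim: s => //= i s IH v; rewrite rev_cons act_rcons reflK IH. Qed.

Definition eqw (s t : seq 'I_n) := act s =1 act t.

Lemma eqw_sym s t : eqw s t -> eqw t s. Proof. by move=> e v; rewrite e. Qed.
Lemma eqw_trans s t u : eqw s t -> eqw t u -> eqw s u.
Proof. by move=> e1 e2 v; rewrite e1 e2. Qed.
Lemma eqw_cat s s' t t' : eqw s s' -> eqw t t' -> eqw (s ++ t) (s' ++ t').
Proof. by move=> e1 e2 v; rewrite !act_cat e1 e2. Qed.
Lemma eqw_cancel s i t : eqw (s ++ i :: i :: t) (s ++ t).
Proof. by move=> v; rewrite !act_cat /= reflK. Qed.

Lemma len_ex s : exists k, `[< exists2 t, eqw t s & size t = k >].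
Proof. by exists (size s); apply/asboolP; exists s. Qed.

Definition len s := ex_minn (len_ex s).

Lemma len_spec s : exists2 t, eqw t s & size t = len s.
Proof. by rewrite /len; case: ex_minnP => k /asboolP. Qed.

Lemma len_min s t : eqw t s -> (len s <= size t)%N.
Proof. by rewrite /len; case: ex_minnP => k _ hmin ht; apply/hmin/asboolP; exists t. Qed.

Lemma len_eqw s s' : eqw s s' -> len s = len s'.
Proof.
move=> e; have [t et ht] := len_spec s; have [t' et' ht'] := len_spec s'.
apply/eqP; rewrite eqn_leq -{1}ht' -{2}ht !len_min // => v; by rewrite ?et ?et' e.
Qed.

Lemma len_size s : (len s <= size s)%N.
Proof. exact: len_min. Qed.

Lemma len_cat_le s t : (len (s ++ t) <= len s + size t)%N.
Proof.
have [u eu <-] := len_spec s.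
by rewrite -size_cat; apply/len_min/eqw_cat.
Qed.

End Reflections.


Lemma ex_argmin (T : Type) (P : T -> Prop) (mu : T -> nat) :
  (exists x, P x) -> exists2 x, P x & forall y, P y -> (mu x <= mu y)%N.
Proof.
move=> [x0 Px0].
have ex : exists k, `[< exists2 x, P x & mu x = k >] by exists (mu x0); apply/asboolP; exists x0.
case: (ex_minnP ex) => k /asboolP [x Px <-] hmin.
by exists x => // y Py; apply/hmin/asboolP; exists y.
Qed.

Lemma finite_fibers_cover (T : eqType) (F : finType) (f : T -> F) :
  exists L : seq T, forall x, exists2 y, y \in L & f y = f x.
Proof.
suff [L hL] : exists L : seq T, forall x, f x \in enum F -> exists2 y, y \in L & f y = f x.
  by exists L => x; apply: hL; rewrite mem_enum.
elim: (enum F) => [|c S [L hL]]; first by exists [::].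
have [[x0 fx0]|nx] := pselect (exists x, f x = c).
  exists (x0 :: L) => x; rewrite inE => /predU1P[->|/hL[y yL fy]].
    by exists x0; rewrite ?mem_head.
  by exists y; rewrite // inE yL orbT.
exists L => x; rewrite inE => /predU1P[fx|]; last exact: hL.
by case: nx; exists x.
Qed.

(** * Integral vectors positive on a free family *)

Lemma clear_denominators p (v : 'I_p -> rat) :
  exists2 D : int, 0 < D & exists z : 'I_p -> int, forall k, (z k)%:~R = D%:~R * v k.
Proof.
exists (\prod_k denq (v k)); first by apply: prodr_gt0 => k _; apply: denq_gt0.
exists (fun k => numq (v k) * \prod_(j | j != k) denq (v j)) => k.
by rewrite intrM numqE !rmorph_prod [X in _ = X * _](bigD1 k) //=; ring.
Qed.

Section FreeFamily.
Variables (n m : nat) (v : 'I_n -> 'rV[int]_m).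
Hypothesis hfree : free_family v.

Definition rat_mx : 'M[rat]_(n, m) := \matrix_(i, k) (v i 0 k)%:~R.

Lemma row_free_rat_mx : row_free rat_mx.
Proof.
apply: inj_row_free => c hc.
have [D D0 [z hz]] := clear_denominators (fun i => c 0 i).
have hz0 : \sum_i z i *: v i = 0.
  apply/rowP => k; rewrite mxE summxE; apply: (@intr_inj rat).
  rewrite rmorph_sum /=.
  under eq_bigr => i _ do rewrite mxE intrM hz.
  have := congr1 (fun M : 'rV[rat]_m => D%:~R * M 0 k) hc.
  rewrite /= !mxE mulr0 mulr_sumr => h.
  rewrite mulr0z -[X in _ = X]h; apply: eq_bigr => i _; rewrite mxE; ring.
apply/rowP => i; rewrite mxE.
have := hz i; rewrite (hfree hz0) => /esym /eqP; rewrite mulf_eq0 intr_eq0 (gt_eqF D0) /=.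
by move/eqP.
Qed.

(* Solve [rat_mx *m r = 1] over the rationals, then clear denominators. *)
Lemma free_family_pair_ge1 : exists rho : 'rV[int]_m, forall i, 1 <= pair (v i) rho.
Proof.
have /row_freeP [B hB] := row_free_rat_mx.
pose r : 'cV[rat]_m := B *m const_mx 1.
have hr : rat_mx *m r = const_mx 1 by rewrite /r mulmxA hB mul1mx.
have [D D0 [z hz]] := clear_denominators (fun k => r k 0).
exists (\row_k z k) => i.
suff -> : pair (v i) (\row_k z k) = D by [].
apply: (@intr_inj rat); rewrite /pair rmorph_sum /=.
under eq_bigr => k _ do rewrite mxE intrM hz.
have := congr1 (fun M : 'cV[rat]_n => D%:~R * M i 0) hr.
rewrite /= !mxE mulr1 mulr_sumr => h.
rewrite -[X in _ = X]h; apply: eq_bigr => k _; rewrite !mxE; ring.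
Qed.

End FreeFamily.

(** * Rank two *)

(* In the basis (alphav s, alphav s') of a rank-two subsystem, with Cartan
   entries a1 = alpha_s(alphav s'), a2 = alpha_s'(alphav s), the reflections
   act on y + c.1 alphav s + c.2 alphav s' through the coordinates c, the
   offsets P, Q being alpha_s(y), alpha_s'(y); [b] selects r_s or r_s'. *)
Definition rank2_step (a1 a2 P Q : int) (b : bool) (c : int * int) : int * int :=
  if b then (c.1 - (P + 2 * c.1 + a1 * c.2), c.2)
  else (c.1, c.2 - (Q + a2 * c.1 + 2 * c.2)).

Fixpoint rank2_iter (a1 a2 P Q : int) (b : bool) (k : nat) (c : int * int) :=
  if k is k'.+1 then rank2_iter a1 a2 P Q (~~ b) k' (rank2_step a1 a2 P Q b c)
  else c.

(* Case a1 a2 >= 4 (affine or hyperbolic): the last hypothesis is an invariant. *)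
Lemma rank2_iter_ge0 a1 a2 k b c : 4 <= a1 * a2 -> a1 <= 0 -> a2 <= 0 ->
  0 <= c.1 -> 0 <= c.2 ->
  (if b then 2 * c.1 <= - a1 * c.2 else 2 * c.2 <= - a2 * c.1) ->
  0 <= (rank2_iter a1 a2 0 0 b k c).1 /\ 0 <= (rank2_iter a1 a2 0 0 b k c).2.
Proof.
move=> h4 ha1 ha2; elim: k b c => [|k IH] b [X Y] //= hX hY hb.
by apply: IH; case: b hb => /= hb; nia.
Qed.

Lemma small_cartan_pair (a1 a2 : int) :
  a1 <= 0 -> a2 <= 0 -> (a1 = 0 <-> a2 = 0) -> a1 * a2 < 4 ->
  [\/ a1 = 0 /\ a2 = 0, a1 = -1 /\ a2 = -1, (a1 = -1 /\ a2 = -2) \/ (a1 = -2 /\ a2 = -1)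
    | (a1 = -1 /\ a2 = -3) \/ (a1 = -3 /\ a2 = -1)].
Proof.
move=> h1 h2 [e1 e2] h4.
have [z|nz] := eqVneq a1 0; first by constructor 1; split => //; apply: e1.
have nz2 : a2 != 0 by apply/eqP => /e2; apply/eqP.
have : a1 \in [:: -3; -2; -1] by rewrite !inE; lia.
have : a2 \in [:: -3; -2; -1] by rewrite !inE; lia.
rewrite !inE => /or3P[] /eqP e2' /or3P[] /eqP e1'; rewrite e1' e2' in h4 *; try lia.
all: first [ by constructor 4; left | by constructor 4; right | by constructor 3; left
           | by constructor 3; right | by constructor 2 ].
Qed.

(* Finite case (types A1xA1, A2, B2, G2): the braid relation of length mm
   holds, and the alternating words shorter than mm keep alphav s positive. *)
Lemma rank2_finite_braid (a1 a2 : int) :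
  a1 <= 0 -> a2 <= 0 -> (a1 = 0 <-> a2 = 0) -> a1 * a2 < 4 ->
  exists2 mm : nat, (0 < mm)%N &
   (forall P Q, rank2_iter a1 a2 P Q false mm (0, 0) = rank2_iter a1 a2 P Q true mm (0, 0)) /\
   (forall k, (k < mm)%N -> 0 <= (rank2_iter a1 a2 0 0 false k (1, 0)).1 /\
                            0 <= (rank2_iter a1 a2 0 0 false k (1, 0)).2).
Proof.
move=> h1 h2 hz h4.
case: (small_cartan_pair h1 h2 hz h4) =>
  [[-> ->]|[-> ->]|[[-> ->]|[-> ->]]|[[-> ->]|[-> ->]]];
  [exists 2%N|exists 3%N|exists 4%N|exists 4%N|exists 6%N|exists 6%N] => //; split;
  (try by move=> P Q /=; congr (_, _); ring);
  move=> k hk; do 6 (case: k hk => [|k] hk; first by []); by [].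
Qed.

Fixpoint alt n (i j : 'I_n) (k : nat) : seq 'I_n :=
  if k is k'.+1 then rcons (alt j i k') i else [::].

Section Rank2.
Variables (n m : nat) (alpha alphav : 'I_n -> 'rV[int]_m).
Hypothesis pair_alpha_alphav : forall i, pair (alpha i) (alphav i) = 2.
Variables s s' : 'I_n.
Hypothesis neq_ss' : s != s'.
Local Notation act := (wact alpha alphav).
Local Notation eqw := (eqw alpha alphav).
Local Notation a1 := (pair (alpha s) (alphav s')).
Local Notation a2 := (pair (alpha s') (alphav s)).

Definition sel b := if b then s else s'.
Definition altb b k := alt (sel b) (sel (~~ b)) k.
Definition vec (c : int * int) : 'rV[int]_m := c.1 *: alphav s + c.2 *: alphav s'.
Definition in_rank2 (t : seq 'I_n) := all (fun x => (x == s) || (x == s')) t.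

Lemma altbS b k : altb b k.+1 = rcons (altb (~~ b) k) (sel b).
Proof. by rewrite /altb /= negbK. Qed.

Lemma size_altb b k : size (altb b k) = k.
Proof. by elim: k b => // k IH b; rewrite altbS size_rcons IH. Qed.

Lemma altb_cat b k j : altb b (k + j) = altb (if odd j then ~~ b else b) k ++ altb b j.
Proof.
elim: j b => [|j IH] b; first by rewrite addn0 cats0.
rewrite addnS !altbS IH /= -rcons_cat; congr (rcons (altb _ _ ++ _) _).
by case: (odd j); case: b.
Qed.

Lemma in_rank2_altb b k : in_rank2 (altb b k).
Proof.
elim: k b => // k IH b; have := IH (~~ b).
rewrite altbS /in_rank2 all_rcons => ->; rewrite andbT.
by case: b; rewrite /= eqxx ?orbT.
Qed.

Lemma refl_vec b y c :
  refl alpha alphav (sel b) (y + vec c) =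
  y + vec (rank2_step a1 a2 (pair (alpha s) y) (pair (alpha s') y) b c).
Proof.
by case: b; rewrite /refl /vec /rank2_step /= !pairD !pairZ !pair_alpha_alphav;
  apply/rowP => k; rewrite !mxE; ring.
Qed.

Lemma act_altb b k y c :
  act (altb b k) (y + vec c) =
  y + vec (rank2_iter a1 a2 (pair (alpha s) y) (pair (alpha s') y) b k c).
Proof. by elim: k b c => [|k IH] b c //=; rewrite altbS act_rcons refl_vec IH. Qed.

Lemma in_rank2_shape t : in_rank2 t ->
  (exists b, t = altb b (size t)) \/ exists u v x, t = u ++ x :: x :: v.
Proof.
elim/last_ind: t => [|t x IH]; first by left; exists true.
rewrite /in_rank2 all_rcons => /andP[hx ht].
case: (IH ht) => [[b eb]|[u [v [y ->]]]]; last first.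
  by right; exists u, (rcons v x), y; rewrite rcons_cat.
case ek: (size t) eb => [|k] eb.
  by move: eb => ->; left; case/orP: hx => /eqP ->; [exists true | exists false].
have [xb|xb] := eqVneq x (sel b).
  by right; exists (altb (~~ b) k), [::], x; rewrite eb altbS xb -!cats1 -catA.
left; exists (~~ b); rewrite size_rcons ek altbS negbK -eb; congr rcons.
by move: xb; case/orP: hx => /eqP ->; case: (b) => //=; rewrite eqxx.
Qed.

Hypotheses (ha1 : a1 <= 0) (ha2 : a2 <= 0) (hz : a1 = 0 <-> a2 = 0).

(* The rank-two case of [act_alphav_Qplus]. *)
Lemma rank2_act_alphav u : in_rank2 u ->
  (forall u', in_rank2 u' -> eqw u' u -> (size u <= size u')%N) ->
  (forall u', in_rank2 u' -> eqw u' (u ++ [:: s]) -> (size u <= size u')%N) ->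
  exists X Y : nat, act u (alphav s) = vec (X%:Z, Y%:Z).
Proof.
move=> hu hmin hmin2.
have [[b eb]|[v [w [x ex]]]] := in_rank2_shape hu; last first.
  have hI : in_rank2 (v ++ w).
    by move: hu; rewrite ex /in_rank2 !all_cat /= => /and3P[-> _ /andP[_ ->]].
  have := hmin _ hI; rewrite ex !size_cat /=.
  by move=> /(_ (eqw_sym (eqw_cancel pair_alpha_alphav _ _ _))) ?; lia.
move: eb; set k := size u => eb; have ek : size u = k by [].
case: b eb => eb.
  case: k ek eb => [|k] ek eb.
    by exists 1%N, 0%N; rewrite eb /vec /= scale1r scale0r addr0.
  have := hmin2 _ (in_rank2_altb false k); rewrite size_altb.
  have he : eqw (altb false k) (u ++ [:: s]).
    by move=> v; rewrite eb altbS act_cat act_rcons /= reflK.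
  by move=> /(_ he) ?; lia.
set c := rank2_iter a1 a2 0 0 false k (1, 0).
have key : act u (alphav s) = vec c.
  have e1 : alphav s = 0 + vec (1, 0) by rewrite /vec /= scale1r scale0r addr0 add0r.
  by rewrite [X in act u X]e1 eb act_altb !pair0 add0r.
suff [p1 p2] : 0 <= c.1 /\ 0 <= c.2.
  by exists `|c.1|%N, `|c.2|%N; rewrite key !gez0_abs.
have [h4|h4] := lerP 4 (a1 * a2); first by apply: rank2_iter_ge0 => //=; lia.
have [mm mm0 [braid pos]] := rank2_finite_braid ha1 ha2 hz h4.
apply: pos; rewrite ltnNge; apply/negP => hk.
have hI : in_rank2 (altb (odd mm) (k - mm) ++ altb false mm.-1).
  by rewrite /in_rank2 all_cat -!/(in_rank2 _) !in_rank2_altb.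
have := hmin2 _ hI; rewrite size_cat !size_altb.
suff he : eqw (altb (odd mm) (k - mm) ++ altb false mm.-1) (u ++ [:: s]).
  by move=> /(_ he) ?; lia.
have eu : u = altb (odd mm) (k - mm) ++ altb false mm by rewrite eb -{1}(subnK hk) altb_cat; case: odd.
have hbr y : act (altb false mm) y = act (altb true mm) y.
  have -> : y = y + vec (0, 0) by rewrite /vec /= !scale0r !addr0.
  by rewrite !act_altb braid.
move=> v; rewrite eu !act_cat hbr; congr (act _ _).
by case: mm mm0 {hI braid eu hk hbr} => // mm _; rewrite altbS act_rcons /= reflK.
Qed.

End Rank2.

(** * Positivity of coroots *)

Definition dominant n m (alpha : 'I_n -> 'rV[int]_m) (lam : 'rV[int]_m) :=
  forall i, 0 <= pair (alpha i) lam.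

Section GCM.
Variables (n m : nat) (A : 'M[int]_n) (alpha alphav : 'I_n -> 'rV[int]_m).
Hypothesis hA : is_GCM A.
Hypothesis hp : forall i j : 'I_n, pair (alpha j) (alphav i) = A i j.
Local Notation act := (wact alpha alphav).
Local Notation len := (len alpha alphav).
Local Notation eqw := (eqw alpha alphav).
Local Notation Qplus := (Qplus alphav).

Lemma GCM_pair_alpha_alphav i : pair (alpha i) (alphav i) = 2.
Proof. by rewrite hp; case: hA. Qed.
Let cartan_diag := GCM_pair_alpha_alphav.

Lemma GCM_pair_le0 s s' : s != s' -> pair (alpha s) (alphav s') <= 0.
Proof. by move=> ne; rewrite hp; case: hA => _ H _; apply: H; rewrite eq_sym. Qed.

Lemma GCM_pair_eq0C s s' :
  pair (alpha s) (alphav s') = 0 <-> pair (alpha s') (alphav s) = 0.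
Proof. by rewrite !hp; case: hA => _ _ H; apply: H. Qed.

(* Induction on len w; writing w = x r_s' reduced, w is split as v u with u a
   reduced word in r_i, r_s' and v of minimal length: the induction hypothesis
   applies to v, and the rank-two lemma to u. *)
Theorem act_alphav_Qplus w i : (len w <= len (w ++ [:: i]))%N -> Qplus (act w (alphav i)).
Proof.
have [N] := ubnP (len w); elim: N w i => // N IH w i hN hi.
have [t et st] := len_spec alpha alphav w.
case: (lastP t) et st => [|x s'] et st; first by rewrite -(et (alphav i)); apply: Qplus_alphav.
rewrite size_rcons in st.
have hx : (len x < len w)%N by rewrite -st ltnS (len_size alpha alphav).
have ew : eqw w (x ++ [:: s']) by rewrite cats1; apply: eqw_sym.
have hne : i != s'.
  apply/eqP => ei; move: hi; rewrite leqNgt => /negP; apply.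
  have e2 : eqw (w ++ [:: i]) x.
    apply: (eqw_trans (t := x ++ [:: s'] ++ [:: i])); first by rewrite catA; apply: eqw_cat.
    by rewrite ei; have := eqw_cancel cartan_diag x s' [::]; rewrite cats0.
  by rewrite (len_eqw e2).
pose adm (vu : seq 'I_n * seq 'I_n) :=
  [/\ in_rank2 i s' vu.2, eqw w (vu.1 ++ vu.2) & (len vu.1 + size vu.2 <= len w)%N].
have Ax : adm (x, [:: s']) by split; rewrite /= ?eqxx ?orbT ?addn1.
have [[v0 u0] A0 hmin1] := ex_argmin (fun vu => len vu.1) (ex_intro _ _ Ax).
have [[v u] [[hIu hwu hlen] hLv] hmin2] :=
  ex_argmin (P := fun vu => adm vu /\ len vu.1 = len v0) (fun vu => size vu.2)
    (ex_intro _ (v0, u0) (conj A0 erefl)).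
move: hIu hwu hlen hLv => /= hIu hwu hlen hLv.
have hvN : (len v < N)%N.
  by move: (hmin1 _ Ax) hx hN; rewrite -hLv /=; lia.
have side j : (j == i) || (j == s') -> (len v <= len (v ++ [:: j]))%N.
  move=> hj; rewrite leqNgt; apply/negP => hlt.
  have : adm (v ++ [:: j], j :: u).
    split => /=; first by rewrite hj.
      by apply: (eqw_trans hwu); rewrite -catA; apply/eqw_sym/eqw_cancel.
    by rewrite addnS -addSn; apply: leq_trans hlen; rewrite leq_add2r.
  by move/hmin1; rewrite /= -hLv leqNgt hlt.
have Pvi : Qplus (act v (alphav i)) by apply/(IH _ _ hvN)/side; rewrite eqxx.
have Pvs : Qplus (act v (alphav s')) by apply/(IH _ _ hvN)/side; rewrite eqxx orbT.
have hmin_u u' : in_rank2 i s' u' -> eqw u' u -> (size u <= size u')%N.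
  move=> hI e; rewrite leqNgt; apply/negP => hlt.
  have : adm (v, u') /\ len v = len v0.
    split => //; split => //; last by apply: leq_trans hlen; rewrite leq_add2l ltnW.
    by apply: (eqw_trans hwu); apply/eqw_cat/eqw_sym.
  by move/hmin2; rewrite leqNgt hlt.
have hmin_u2 u' : in_rank2 i s' u' -> eqw u' (u ++ [:: i]) -> (size u <= size u')%N.
  move=> hI e; rewrite leqNgt; apply/negP => hlt.
  have e3 : eqw (w ++ [:: i]) (v ++ u').
    apply: (eqw_trans (t := (v ++ u) ++ [:: i])); first exact: eqw_cat.
    by rewrite -catA; apply/eqw_cat/eqw_sym.
  move: hi; rewrite leqNgt => /negP; apply; rewrite (len_eqw e3).
  by apply: leq_ltn_trans (len_cat_le alpha alphav _ _) _; apply: leq_trans hlen; rewrite ltn_add2l.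
have hne' : s' != i by rewrite eq_sym.
have [X [Y eXY]] := rank2_act_alphav cartan_diag hne (GCM_pair_le0 hne)
  (GCM_pair_le0 hne') (GCM_pair_eq0C i s') hIu hmin_u hmin_u2.
rewrite hwu act_cat eXY /vec /= actD !actZ.
by apply: QplusD; apply: QplusZ.
Qed.

Lemma dominant_sub_act_Qplus lam w : dominant alpha lam -> Qplus (lam - act w lam).
Proof.
move=> hl; have [N] := ubnP (len w); elim: N w => // N IH w hN.
have [t et st] := len_spec alpha alphav w.
case: (lastP t) et st => [|x j] et st; first by rewrite -(et lam) subrr; apply: Qplus0.
rewrite size_rcons in st.
have hx : (len x < len w)%N by rewrite -st ltnS (len_size alpha alphav).
have exw : eqw (x ++ [:: j]) w by move=> v; rewrite cats1 et.
have hxj : (len x <= len (x ++ [:: j]))%N by rewrite (len_eqw exw) ltnW.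
rewrite -(et lam) act_rcons /refl actB actZ.
have -> : lam - (act x lam - pair (alpha j) lam *: act x (alphav j)) =
          (lam - act x lam) + pair (alpha j) lam *: act x (alphav j)
  by rewrite opprB addrA addrAC.
apply: QplusD; first by apply: IH; rewrite -ltnS (leq_trans _ hN).
by rewrite -(gez0_abs (hl j)); apply/QplusZ/act_alphav_Qplus.
Qed.

(** * The longest element *)

Lemma Wv_finite_longest : Wv_finite alpha alphav -> exists w0, forall s, (len s <= len w0)%N.
Proof.
move=> [L hL].
have bounded s : (len s <= \max_(t <- L) len t)%N.
  by have [t tL e] := hL s; rewrite (len_eqw e) (leq_bigmax_seq _ tL).
have exP : exists k, `[< exists s, len s = k >] by exists (len [::]); apply/asboolP; exists [::].
have ubP k : `[< exists s, len s = k >] -> (k <= \max_(t <- L) len t)%N.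
  by move/asboolP => [s <-]; apply: bounded.
case: (ex_maxnP exP ubP) => k /asboolP [w0 <-] hmax.
by exists w0 => s; apply: hmax; apply/asboolP; exists s.
Qed.

Section Longest.
Variable w0 : seq 'I_n.
Hypothesis longest : forall s, (len s <= len w0)%N.

Lemma longest_act_alphav i : Qplus (- act w0 (alphav i)).
Proof.
have hl : (len (w0 ++ [:: i]) <= len ((w0 ++ [:: i]) ++ [:: i]))%N.
  by rewrite -catA (len_eqw (eqw_cancel cartan_diag w0 i [::])) cats0.
by have := act_alphav_Qplus hl; rewrite act_cat /= refl_alphav // actN.
Qed.

Lemma longest_act_Qplus q : Qplus q -> Qplus (- act w0 q).
Proof.
move=> [c ->]; rewrite act_sum -sumrN.
under eq_bigr => i _ do rewrite actZ -scalerN.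
by apply/Qplus_sum/longest_act_alphav.
Qed.

End Longest.

(* A point lam of the support lies below some mu in J, and w0 lam below some
   mu' in J.  Since w0 reverses the order, mu' - w0 mu = (mu' - w0 lam) +
   d with d = - w0 (mu - lam) in Q^vee_+, so the coordinates of d are bounded
   by a positive functional applied to the finitely many mu' - w0 mu, and
   lam = mu + w0^-1 d ranges over a finite set. *)
Theorem Wv_finite_invariant_finite_supp (R : nzRingType) (a : 'rV[int]_m -> R) :
  free_family alphav -> Wv_finite alpha alphav ->
  almost_finite_supp alphav a -> Wv_invariant alpha alphav a -> finite_supp a.
Proof.
move=> hfv hW [J hJ] hinv.
have [w0 longest] := Wv_finite_longest hW.
have [phi hphi] := free_family_pair_ge1 hfv.
have {}hphi j : 1 <= pair phi (alphav j) by rewrite pairC.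
pose K := (\max_(mu <- J) \max_(mu' <- J) `|pair phi (mu' - act w0 mu)|)%N.
pose G mu (f : {ffun 'I_n -> 'I_K.+1}) := mu + act (rev w0) (\sum_i (f i : nat)%:Z *: alphav i).
exists [seq G mu f | mu <- J, f <- enum {ffun 'I_n -> 'I_K.+1}] => lam hlam.
have [mu muJ hmu] := hJ lam hlam.
have [mu' mu'J hmu'] : exists2 mu', mu' \in J & Qplus (mu' - act w0 lam).
  by apply: hJ; rewrite hinv.
have [d hd] := longest_act_Qplus longest hmu.
have dK i : (d i < K.+1)%N.
  rewrite ltnS -lez_nat; apply: le_trans (Qplus_coef_le_pair d i hphi) _.
  have -> : pair phi (\sum_j (d j)%:Z *: alphav j) =
            pair phi (mu' - act w0 mu) - pair phi (mu' - act w0 lam).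
    by rewrite -hd -pairB actB; congr pair; apply/rowP => k; rewrite !mxE; ring.
  have hY : 0 <= pair phi (mu' - act w0 lam).
    by apply: Qplus_pair_ge0 hmu' => j; apply: le_trans (hphi j).
  apply: (@le_trans _ _ (pair phi (mu' - act w0 mu))); first by rewrite gerBl.
  apply: le_trans (ler_norm _) _; rewrite -abszE lez_nat.
  exact/(leq_trans _ (leq_bigmax_seq _ muJ isT))/(leq_bigmax_seq _ mu'J isT).
pose f := [ffun i => (Ordinal (dK i) : 'I_K.+1)].
have -> : lam = G mu f.
  rewrite /G; under eq_bigr => i _ do rewrite ffunE.
  by rewrite -hd actN act_revK // opprB addrC subrK.
by apply: allpairs_f => //; rewrite mem_enum.
Qed.

Lemma dominant_orbit_finite (R : nzRingType) lam :
  (forall a : 'rV[int]_m -> R, almost_finite_supp alphav a ->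
     Wv_invariant alpha alphav a -> finite_supp a) ->
  dominant alpha lam -> exists S : seq 'rV[int]_m, forall s, act s lam \in S.
Proof.
move=> Pr hl.
pose a mu : R := if `[< exists s, mu = act s lam >] then 1 else 0.
have [S hS] : finite_supp a.
  apply: Pr => [|s mu].
    exists [:: lam] => mu; rewrite /a; case: asboolP => [[s ->] _|_]; last by rewrite eqxx.
    by exists lam; rewrite ?inE //; apply: dominant_sub_act_Qplus.
  rewrite /a; case: asboolP => [[t et]|nt]; case: asboolP => [[t' et']|nt'] //.
    by case: nt'; exists (rev s ++ t); rewrite act_cat -et act_revK.
  by case: nt; exists (s ++ t'); rewrite act_cat et'.
exists S => s; apply: hS; rewrite /a; case: asboolP => [_|[]]; first exact: oner_neq0.
by exists s.
Qed.

End GCM.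

(** * Finite dominant orbits *)

(* Every vector is an integral combination of a strictly dominant rho and of
   the dominant vectors e_k + M_k rho, so a word acts on Y as determined by
   the images of these m + 1 vectors, which lie in finite orbits. *)
Lemma Wv_finite_of_dominant_orbits n m (alpha alphav : 'I_n -> 'rV[int]_m) :
  free_family alpha ->
  (forall lam, dominant alpha lam ->
     exists S : seq 'rV[int]_m, forall s, wact alpha alphav s lam \in S) ->
  Wv_finite alpha alphav.
Proof.
move=> hfa horb.
have [rho hrho] := free_family_pair_ge1 hfa.
pose M (k : 'I_m) : int := \sum_i `|alpha i 0 k|.
pose lamv (o : option 'I_m) := if o is Some k then delta_mx 0 k + M k *: rho else rho.
have hdom o : dominant alpha (lamv o).
  case: o => [k|] i /=; last exact: le_trans (hrho i).
  rewrite pairD pairZ pair_delta.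
  have hM : `|alpha i 0 k| <= M k.
    by rewrite /M (bigD1 i) //= lerDl sumr_ge0.
  have := hrho i; have := normr_ge0 (alpha i 0 k); have := ler_norm (- alpha i 0 k).
  rewrite normrN; nia.
have [F hF] := choice (fun o => horb _ (hdom o)).
pose SS := flatten [seq F o | o <- enum {: option 'I_m}].
have inS s o : wact alpha alphav s (lamv o) \in SS.
  by apply/flatten_mapP; exists o; rewrite ?mem_enum.
pose f s := [ffun o => inord (index (wact alpha alphav s (lamv o)) SS) : 'I_(size SS).+1].
have [L hL] := finite_fibers_cover f.
exists L => s; have [t tL ft] := hL s; exists t => // v.
have et o : wact alpha alphav s (lamv o) = wact alpha alphav t (lamv o).
  have := congr1 (fun g : {ffun option 'I_m -> 'I_(size SS).+1} => val (g o)) ft.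
  rewrite /= !ffunE !inordK ?ltnS ?index_size //.
  by move/(congr1 (nth 0 SS)); rewrite !nth_index.
rewrite (row_sum_delta v) !act_sum; apply: eq_bigr => k _; rewrite !actZ.
have -> : delta_mx 0 k = lamv (Some k) - M k *: lamv None by rewrite /= addrK.
by rewrite !actB !actZ !et.
Qed.

Theorem mainTheorem14 (R : comNzRingType) (n m : nat) (A : 'M[int]_n)
  (alpha alphav : 'I_n -> 'rV[int]_m) :
  is_GCM A ->
  free_family alpha -> free_family alphav ->
  (forall i j : 'I_n, pair (alpha j) (alphav i) = A i j) ->
  ((forall a : 'rV[int]_m -> R,
      almost_finite_supp alphav a -> Wv_invariant alpha alphav a ->
      finite_supp a)
   <-> Wv_finite alpha alphav).
Proof.
move=> hA hfa hfv hp; split => [Pr | hW a].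
  apply: Wv_finite_of_dominant_orbits hfa _ => lam.
  exact: (@dominant_orbit_finite _ _ _ _ _ hA hp R).
exact: (@Wv_finite_invariant_finite_supp _ _ _ _ _ hA hp R).
Qed.
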